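(* Let $q=(V_q,E_q,L_q)$ and $H=(V_H,E_H,L_H)$ be hypergraphs, let $E'\subseteq E_q$ be non-empty with partial query $q'=(\bigcup_{e\in E'}e,E',L_q)$, and let $M:E'\to E_H$ be any map. Then $M$ is a partial embedding of $q'$ in $H$ if and only if for every non-empty subset $S\subseteq E'$ we have $Sig(\mathrm{Cell}_q(S))=Sig(\mathrm{Cell}_H^M(S))$.
   Context: A (vertex-labeled) hypergraph is a triple $H=(V,E,L)$ where $V$ is a finite set, $E$ is a set of non-empty subsets of $V$ (hyperedges, no repeated hyperedges) with $\bigcup_{e\in E}e=V$, and $L:V\to\Sigma$ assigns each vertex a label. For $S\subseteq V$, $Sig(S)$ is the multiset of labels $\{L(v)\mid v\in S\}$. For $E'\subseteq E_q$, the partial query is $q'=(\bigcup_{e\in E'}e,E',L_q)$; a map $M:E'\to E_H$ is a partial embedding if there exists an injective label-preserving $\phi:\bigcup_{e\in E'}e\to V_H$ with $\{\phi(u):u\in e\}=M(e)$ for all $e\in E'$. Cells: for non-empty $S\subseteq E'$, $\mathrm{Cell}_q(S)=\{u\in\bigcup_{e\in E'}e : \{e\in E': u\in e\}=S\}$ (vertices lying in all hyperedges of $S$ and in no hyperedge of $E'\setminus S$), and $\mathrm{Cell}^M_H(S)=\{v\in\bigcup_{e\in E'}M(e) : \{e\in E': v\in M(e)\}=S\}$ (the corresponding cell of the image hyperedges $M(S)$). *)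

From mathcomp Require Import all_boot.
Set Implicit Arguments. Unset Strict Implicit. Unset Printing Implicit Defensive.

(* A vertex-labeled hypergraph with vertex set the finite type V
   (the covering condition makes V exactly the union of the hyperedges). *)
Record hypergraph (V : finType) (Sigma : Type) := Hypergraph {
  hedges : {set {set V}};
  hlab : V -> Sigma;
  hedges_nonempty : forall e, e \in hedges -> e != set0;
  hedges_cover : \bigcup_(e in hedges) e = [set: V]
}.

(* Sig(S): the multiset of labels of S, represented as a sequence;
   multiset equality is perm_eq. *)
Definition Sig (V : finType) (Sigma : Type) (L : V -> Sigma) (S : {set V}) : seq Sigma :=
  [seq L v | v <- enum S].

Definition sig_eq (Sigma : eqType) (s1 s2 : seq Sigma) : Prop := perm_eq s1 s2.

Definition pverts (V : finType) (E' : {set {set V}}) : {set V} :=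
  \bigcup_(e in E') e.

Definition partial_embedding (Vq VH : finType) (Sigma : Type)
  (q : hypergraph Vq Sigma) (H : hypergraph VH Sigma)
  (E' : {set {set Vq}}) (M : {set Vq} -> {set VH}) : Prop :=
  exists phi : Vq -> VH,
    [/\ {in pverts E' &, injective phi},
        {in pverts E', forall u, hlab H (phi u) = hlab q u} &
        forall e, e \in E' -> phi @: e = M e].

Definition cell_q (Vq : finType) (E' S : {set {set Vq}}) : {set Vq} :=
  [set u in pverts E' | [set e in E' | u \in e] == S].

Definition cell_H (Vq VH : finType) (E' S : {set {set Vq}})
  (M : {set Vq} -> {set VH}) : {set VH} :=
  [set v in \bigcup_(e in E') M e | [set e in E' | v \in M e] == S].

From mathcomp Require Import all_boot.
Set Implicit Arguments. Unset Strict Implicit. Unset Printing Implicit Defensive.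

(* Refine the label of a vertex by its incidence pattern: the set of hyperedges
   e of E' with u in e (for q), or with v in M e (for H).  The cells are the
   fibres of the incidence pattern, so the cellwise signature equalities say
   exactly that the two multisets of refined labels coincide, i.e. that some
   bijection between the vertex sets preserves refined labels.  Preserving
   incidence patterns is the same as mapping every e onto M e, so such
   bijections are exactly the partial embeddings. *)

Lemma perm_map_matching (T1 T2 X : eqType) (f : T1 -> X) (g : T2 -> X)
    (y0 : T2) (s : seq T1) (t : seq T2) :
  uniq s -> perm_eq (map f s) (map g t) ->
  exists h : T1 -> T2, perm_eq (map h s) t /\ {in s, forall x, g (h x) = f x}.
Proof.
elim: s t => [|x s IHs] t /=.
  by move=> _; rewrite perm_sym => /perm_nilP; case: t => // _; exists (fun=> y0).
case/andP=> xNs s_uniq perm_fg.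
have /mapP[y yt fxgy] : f x \in map g t by rewrite -(perm_mem perm_fg) mem_head.
have /(IHs _ s_uniq)[h [hst gh]] : perm_eq (map f s) (map g (rem y t)).
  rewrite -(perm_cons (f x)); apply: perm_trans perm_fg _.
  by rewrite fxgy; exact: (perm_map g (perm_to_rem yt)).
exists (fun z => if z == x then y else h z); split.
  rewrite /= eqxx (permPr (perm_to_rem yt)) perm_cons.
  rewrite (eq_in_map _ h s).1 // => z zs.
  by case: eqP zs => // ->; rewrite (negbTE xNs).
by move=> z; rewrite in_cons; case: eqP => [-> _ | _ /= /gh].
Qed.

Lemma Sig_imset (T1 T2 : finType) (X : eqType) (g : T2 -> X) (h : T1 -> T2)
    (A : {set T1}) :
  {in A &, injective h} -> perm_eq (Sig g (h @: A)) (Sig (g \o h) A).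
Proof.
move=> h_inj; rewrite /Sig (map_comp g h); apply: perm_map.
apply: uniq_perm; rewrite ?enum_uniq //.
  by rewrite map_inj_in_uniq ?enum_uniq // => x y; rewrite !mem_enum; apply: h_inj.
move=> y; rewrite mem_enum.
by apply/imsetP/mapP => -[x xA ->]; exists x; rewrite ?mem_enum in xA *.
Qed.

Lemma perm_Sig_bij (T1 T2 : finType) (X : eqType) (f : T1 -> X) (g : T2 -> X)
    (y0 : T2) (A : {set T1}) (B : {set T2}) :
  perm_eq (Sig f A) (Sig g B) <->
  exists h : T1 -> T2,
    [/\ {in A &, injective h}, h @: A = B & {in A, forall x, g (h x) = f x}].
Proof.
split=> [fAgB | [h [h_inj <- gh]]].
  have [h [hAB gh]] := perm_map_matching y0 (enum_uniq (mem A)) fAgB.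
  have hA : h @: A = B.
    apply/setP => y; rewrite -[y \in B]mem_enum -(perm_mem hAB).
    by apply/imsetP/mapP => -[x xA ->]; exists x; rewrite ?mem_enum in xA *.
  exists h; split=> // [|x xA]; last by rewrite gh ?mem_enum.
  by apply/imset_injP; rewrite hA !cardE -(perm_size hAB) size_map.
rewrite perm_sym (perm_trans (Sig_imset g h_inj)) // /Sig.
by rewrite (eq_in_map _ f _).1 // => x; rewrite mem_enum => /gh.
Qed.

Lemma count_fibre (T : Type) (X K : eqType) (f : T -> X) (k : T -> K) (c : K)
    (p : pred X) (s : seq T) :
  count p [seq f x | x <- s & k x == c] =
  count [pred z | p z.1 && (z.2 == c)] [seq (f x, k x) | x <- s].
Proof. by rewrite !count_map count_filter; apply: eq_count. Qed.

Lemma perm_pair_fibres (T1 T2 : Type) (X K : eqType) (f : T1 -> X) (k : T1 -> K)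
    (g : T2 -> X) (l : T2 -> K) (s : seq T1) (t : seq T2) :
  perm_eq [seq (f x, k x) | x <- s] [seq (g y, l y) | y <- t] <->
  forall c, perm_eq [seq f x | x <- s & k x == c] [seq g y | y <- t & l y == c].
Proof.
split=> [/permP eq_cnt c | eq_fibres]; first by apply/permP => p; rewrite !count_fibre.
apply/allP => -[a c] _ /=.
have count_pair T (f' : T -> X) (k' : T -> K) u :
    count_mem (a, c) [seq (f' x, k' x) | x <- u] =
    count_mem a [seq f' x | x <- u & k' x == c].
  by rewrite count_fibre; apply: eq_count => -[x z]; rewrite /= xpair_eqE.
by rewrite !count_pair (permP (eq_fibres c)).
Qed.

Lemma enum_sep (T : finType) (A : {set T}) (p : pred T) :
  enum [set x in A | p x] = [seq x <- enum A | p x].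
Proof. by rewrite /enum_mem -filter_predI; apply: eq_filter => x; rewrite !inE andbC. Qed.

Lemma perm_Sig_pair_fibres (T1 T2 : finType) (X K : eqType)
    (f : T1 -> X) (k : T1 -> K) (g : T2 -> X) (l : T2 -> K)
    (A : {set T1}) (B : {set T2}) :
  perm_eq (Sig (fun x => (f x, k x)) A) (Sig (fun y => (g y, l y)) B) <->
  forall c, perm_eq (Sig f [set x in A | k x == c]) (Sig g [set y in B | l y == c]).
Proof.
rewrite /Sig; apply: iff_trans (perm_pair_fibres _ _ _ _ _ _) _.
by split=> eq_fibres c; move: (eq_fibres c); rewrite !enum_sep.
Qed.

Section PartialQuery.

Variables (Vq VH : finType) (Sigma : eqType).
Variables (q : hypergraph Vq Sigma) (H : hypergraph VH Sigma).
Variables (E' : {set {set Vq}}) (M : {set Vq} -> {set VH}).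

Definition incident_q (u : Vq) : {set {set Vq}} := [set e in E' | u \in e].

Definition incident_H (v : VH) : {set {set Vq}} := [set e in E' | v \in M e].

Definition image_verts : {set VH} := \bigcup_(e in E') M e.

Lemma cell_q_proper S u : u \in cell_q E' S -> (S \subset E') && (S != set0).
Proof.
rewrite inE => /andP[/bigcupP[e eE' ue] /eqP<-].
apply/andP; split; first by apply/subsetP => e'; rewrite inE => /andP[].
by apply/set0Pn; exists e; rewrite inE eE'.
Qed.

Lemma cell_H_proper S v : v \in cell_H E' S M -> (S \subset E') && (S != set0).
Proof.
rewrite inE => /andP[/bigcupP[e eE' ve] /eqP<-].
apply/andP; split; first by apply/subsetP => e'; rewrite inE => /andP[].
by apply/set0Pn; exists e; rewrite inE eE'.
Qed.

Lemma perm_incidence_cells :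
  perm_eq (Sig (fun u => (hlab q u, incident_q u)) (pverts E'))
          (Sig (fun v => (hlab H v, incident_H v)) image_verts) <->
  forall S : {set {set Vq}}, S \subset E' -> S != set0 ->
    sig_eq (Sig (hlab q) (cell_q E' S)) (Sig (hlab H) (cell_H E' S M)).
Proof.
apply: iff_trans (perm_Sig_pair_fibres _ _ _ _ _ _) _.
split=> [eq_cells S _ _ | eq_cells S]; first exact: eq_cells.
have [/andP[sSE' nS] | improper] := boolP ((S \subset E') && (S != set0)).
  exact: eq_cells.
have cell_q0 : cell_q E' S = set0.
  by apply/setP => u; rewrite in_set0; apply: contraNF improper; apply: cell_q_proper.
have cell_H0 : cell_H E' S M = set0.
  by apply/setP => v; rewrite in_set0; apply: contraNF improper; apply: cell_H_proper.
by rewrite -/(cell_q E' S) -/(cell_H E' S M) cell_q0 cell_H0 /Sig !enum_set0.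
Qed.

Lemma mem_image_edge (phi : Vq -> VH) (u : Vq) (e : {set Vq}) :
  {in pverts E' &, injective phi} -> phi @: e = M e ->
  u \in pverts E' -> e \in E' -> (phi u \in M e) = (u \in e).
Proof.
move=> phi_inj <- uP eE'; apply/imsetP/idP => [[w we /phi_inj->] // | ue].
  by apply/bigcupP; exists e.
by exists u.
Qed.

Lemma partial_embedding_iff_incidence_bij :
  partial_embedding q H E' M <->
  exists phi : Vq -> VH,
    [/\ {in pverts E' &, injective phi}, phi @: pverts E' = image_verts &
        {in pverts E', forall u,
           (hlab H (phi u), incident_H (phi u)) = (hlab q u, incident_q u)}].
Proof.
split=> [[phi [phi_inj lab_phi img_phi]] | [phi [phi_inj im_phi inc_phi]]].
  exists phi; split=> // [|u uP].
    apply/setP => v; apply/imsetP/bigcupP => [[u /bigcupP[e eE' ue] ->] | [e eE']].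
      by exists e; rewrite // -img_phi ?imset_f.
    rewrite -img_phi // => /imsetP[u ue ->].
    by exists u => //; apply/bigcupP; exists e.
  rewrite lab_phi //; congr pair; apply/setP => e; rewrite !inE.
  by case eE': (e \in E'); rewrite //= (mem_image_edge phi_inj (img_phi e eE')).
exists phi; split=> [|u uP|e eE'].
- exact: phi_inj.
- by case: (inc_phi u uP).
- have incE u : u \in pverts E' -> (phi u \in M e) = (u \in e).
    by move=> uP; case: (inc_phi u uP) => _ /setP/(_ e); rewrite !inE eE'.
  apply/setP => v; apply/imsetP/idP => [[u ue ->] | vMe].
    by rewrite incE //; apply/bigcupP; exists e.
  have : v \in phi @: pverts E' by rewrite im_phi; apply/bigcupP; exists e.
  by case/imsetP=> u uP vE; exists u; rewrite // -incE // -vE.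
Qed.

End PartialQuery.

Theorem theorem3 (Vq VH : finType) (Sigma : eqType)
  (q : hypergraph Vq Sigma) (H : hypergraph VH Sigma)
  (E' : {set {set Vq}}) (M : {set Vq} -> {set VH}) :
  E' \subset hedges q -> E' != set0 ->
  (forall e, e \in E' -> M e \in hedges H) ->
  (partial_embedding q H E' M <->
   forall S : {set {set Vq}}, S \subset E' -> S != set0 ->
     sig_eq (Sig (hlab q) (cell_q E' S)) (Sig (hlab H) (cell_H E' S M))).
Proof.
move=> _ /set0Pn[e0 e0E'] ME'.
have [y0 _] := set0Pn _ (hedges_nonempty (ME' e0 e0E')).
apply: iff_trans (partial_embedding_iff_incidence_bij q H E' M) _.
apply: iff_trans (perm_incidence_cells q H E' M).
exact: iff_sym (perm_Sig_bij _ _ y0 _ _).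
Qed.
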